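(* For every $n \geqslant 2$ there exist a finite alphabet $\Sigma_n$, a partial function $\delta_n: \{1,\ldots,n\} \times \Sigma_n \to \{1,\ldots,n\} \times \{-1,+1\}$, and a string $w_n \in \Sigma_n^*$ of length $3 \cdot 2^{n-2} - 1$ such that: (1) for every position $i \in \{1, \ldots, |w_n|\}$, the computation of $\delta_n$ on $w_n$ started at position $i$ in state $n$ leaves $w_n$, and the first time it leaves $w_n$ it does so by a move from position $|w_n|$ to the right into state $1$; (2) for every nonempty string $u \in \Sigma_n^*$, if there exists a position $i \in \{1,\ldots,|u|\}$ such that the computation of $\delta_n$ on $u$ started at position $i$ in state $n$ leaves $u$, and the first time it leaves $u$ it does so by a move from position $|u|$ to the right into state $1$, then $|u| \geqslant |w_n|$.
   Context: For a partial transition function $\delta: Q \times \Sigma \to Q \times \{-1,+1\}$ (no end-markers, no initial or accepting states) and a string $u = c_1 \cdots c_m \in \Sigma^*$, the computation started at position $i \in \{1,\ldots,m\}$ in state $q$ is the sequence of configurations (state, position) defined as follows: in configuration $(p, j)$ with $1 \leqslant j \leqslant m$, if $\delta(p, c_j) = (r, d)$ the next configuration is $(r, j+d)$; if $\delta(p, c_j)$ is undefined the computation halts without leaving $u$. The computation leaves $u$ when it reaches a position $j+d \notin \{1,\ldots,m\}$, i.e. moves left from position $1$ or right from position $m$; it may also run forever inside $u$. *)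

From mathcomp Require Import all_boot.
Set Implicit Arguments. Unset Strict Implicit. Unset Printing Implicit Defensive.

Inductive dir := Left | Right.

Definition trans (Q S : Type) := Q -> S -> option (Q * dir).

(* A configuration: (state, position); positions of u = c_1...c_m are 1..m,
   positions 0 and m+1 mean the head has left u. *)
Definition config (Q : Type) := (Q * nat)%type.

Definition step (Q S : Type) (delta : trans Q S) (u : seq S) (c : config Q)
  : option (config Q) :=
  let: (p, j) := c in
  if (1 <= j <= size u) then
    match u with
    | [::] => None
    | c0 :: _ =>
      match delta p (nth c0 u j.-1) with
      | Some (r, Left) => Some (r, j.-1)
      | Some (r, Right) => Some (r, j.+1)
      | None => None
      end
    end
  else None.

Fixpoint run (Q S : Type) (delta : trans Q S) (u : seq S) (k : nat)
  (c : config Q) : option (config Q) :=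
  match k with
  | 0 => Some c
  | k'.+1 => match step delta u c with
             | Some c' => run delta u k' c'
             | None => None
             end
  end.

(* The computation on u started at position i in state q leaves u, and the
   first time it leaves u it does so by moving right from position |u| into
   state r.  (Since the computation stops as soon as it leaves u, reaching
   position |u|+1 is exactly that first exit.) *)
Definition leaves_right_into (Q S : Type) (delta : trans Q S) (u : seq S)
  (i : nat) (q r : Q) : Prop :=
  exists k, run delta u k (q, i) = Some (r, (size u).+1).

(* Letters carry a height.  A state s > 0 crosses letters lower than s in the
   direction of the letter's flag for s, halts on higher ones, and turns back as
   state s - 1 on a letter of height s; state 0 always moves right, becoming
   (height - 1) of the letter it leaves.  The level-(s+1) witness is the level-s
   witness twice around a letter of height s + 1, flagged so that state s + 1
   walks to that peak from either side; from the peak, state s crosses the left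
   copy and returns in state 0, which sends state s through the right copy.
   Conversely, a run of state s > 0 leaving a window to the right in state 0
   must turn back on some letter of height s, return to it in state 0 from the
   left and then leave it to the right as state s - 1 (any other return halts,
   or reads that letter in a state at least s and restarts the argument on a
   shorter run).
   By induction on the length of the run each side of that letter spans at least
   wlen (s - 1) cells, hence the window at least wlen s = 2 wlen (s - 1) + 1. *)

From mathcomp Require Import all_boot zify.
Set Implicit Arguments. Unset Strict Implicit. Unset Printing Implicit Defensive.

Section WindowedRuns.

Variables (Q S : Type) (delta : trans Q S) (u : seq S).

Definition move (d : dir) (i : nat) : nat := if d is Left then i.-1 else i.+1.

Lemma step_adjacent c q j : step delta u c = Some (q, j) -> j = c.2.-1 \/ j = c.2.+1.
Proof.
case: c => p i; rewrite /step; case: ifP => // _ st.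
case: u st => [//|c0 u'].
by case: (delta p _) => [[r []]|] // [_ <-]; [left | right].
Qed.

Fixpoint run_within (a b k : nat) (c : config Q) : option (config Q) :=
  if k is k'.+1 then
    if a <= c.2 <= b then
      if step delta u c is Some c' then run_within a b k' c' else None
    else None
  else Some c.

Lemma run_withinS a b k c : run_within a b k.+1 c =
  if a <= c.2 <= b then
    if step delta u c is Some c' then run_within a b k c' else None
  else None.
Proof. by []. Qed.

Lemma run_within_size k c : run_within 1 (size u) k c = run delta u k c.
Proof.
elim: k c => [|k IH] [q i] //; rewrite run_withinS.
have -> : run delta u k.+1 (q, i) =
  if step delta u (q, i) is Some c' then run delta u k c' else None by [].
case: ifP => [_|out]; last by rewrite /step /= out.
by case: (step delta u (q, i)).
Qed.

Lemma run_within_trans a b k1 k2 c c' c'' : run_within a b k1 c = Some c' ->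
  run_within a b k2 c' = Some c'' -> run_within a b (k1 + k2) c = Some c''.
Proof.
elim: k1 c => [|k1 IH] c; first by case=> ->.
rewrite addSn !run_withinS; case: ifP => // _.
by case: (step delta u c) => // c1; apply: IH.
Qed.

Lemma run_within_widen a b a' b' k c c' : a <= a' -> b' <= b ->
  run_within a' b' k c = Some c' -> run_within a b k c = Some c'.
Proof.
move=> le_a le_b; elim: k c => [|k IH] c //; rewrite !run_withinS.
case: ifP => // /andP[a'_le le_b']; rewrite (leq_trans le_a a'_le) (leq_trans le_b' le_b).
by case: (step delta u c) => // c2; apply: IH.
Qed.

(* The head moves by one cell per step, so the run visits p; cut it at the
   first visit. *)
Lemma run_within_cross_right a b p k c r e : c.2 < p -> p <= e ->
  run_within a b k c = Some (r, e) ->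
  exists t q, [/\ t <= k, run_within a p.-1 t c = Some (q, p)
                & run_within a b (k - t) (q, p) = Some (r, e)].
Proof.
elim: k c => [|k IH] [q0 j] lt_jp le_pe; rewrite /= in lt_jp; first by case=> _ ej; lia.
rewrite run_withinS; case: ifP => // /andP[a_le le_b]; rewrite /= in a_le le_b.
case st: (step delta u (q0, j)) => [[q1 j1]|] // run_k.
have adj := step_adjacent st; rewrite /= in adj.
have in_win : a <= (q0, j).2 <= p.-1 by apply/andP; split => /=; lia.
have [ej | ne] := eqVneq j1 p.
  by exists 1, q1; rewrite subn1 run_withinS in_win st -ej.
have [t [q [le_tk first rest]]] := IH (q1, j1) ltac:(rewrite /=; lia) le_pe run_k.
by exists t.+1, q; rewrite subSS run_withinS in_win st.
Qed.

Lemma run_within_cross_left a b p k c c' : p < c.2 ->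
  run_within a b k c = Some c' ->
  run_within p.+1 b k c = Some c' \/
  exists t q, 0 < t <= k /\ run_within a b (k - t) (q, p) = Some c'.
Proof.
elim: k c => [|k IH] [q0 j] lt_pj; rewrite /= in lt_pj; first by left.
rewrite run_withinS; case: ifP => // /andP[a_le le_b]; rewrite /= in a_le le_b.
case st: (step delta u (q0, j)) => [[q1 j1]|] // run_k.
have adj := step_adjacent st; rewrite /= in adj.
have [ej | ne] := eqVneq j1 p.
  by right; exists 1, q1; split => //; rewrite subn1 -ej.
case: (IH (q1, j1) ltac:(rewrite /=; lia) run_k) => [inside | [t [q [lt_tk rest]]]].
  by left; rewrite run_withinS (_ : p.+1 <= (q0, j).2 <= b) ?st //; apply/andP; split => /=; lia.
by right; exists t.+1, q; rewrite subSS; split => //; lia.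
Qed.

Section Reading.

Variable x0 : S.

Lemma stepE q i : step delta u (q, i) =
  if 1 <= i <= size u then
    if delta q (nth x0 u i.-1) is Some (r, d) then Some (r, move d i) else None
  else None.
Proof.
rewrite /step; case: ifP => // /andP[i_gt0 i_le].
case: u i_le => [|c0 u'] i_le; first by case: i i_gt0 i_le.
rewrite (set_nth_default x0 c0); last by case: i i_gt0 i_le.
by case: (delta q _) => [[r []]|].
Qed.

Lemma run_withinS_inv a b k q i c' : run_within a b k.+1 (q, i) = Some c' ->
  [/\ a <= i <= b, 1 <= i <= size u &
      exists r d, delta q (nth x0 u i.-1) = Some (r, d) /\
                  run_within a b k (r, move d i) = Some c'].
Proof.
rewrite run_withinS stepE; case: ifP => // in_ab; case: ifP => // in_u.
by case: (delta q _) => [[r d]|] // run_k; split => //; exists r, d.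
Qed.

Lemma run_withinS_delta a b k q i r d :
  a <= i <= b -> 1 <= i <= size u -> delta q (nth x0 u i.-1) = Some (r, d) ->
  run_within a b k.+1 (q, i) = run_within a b k (r, move d i).
Proof. by move=> in_ab in_u dq; rewrite run_withinS stepE /= in_ab in_u dq. Qed.

Lemma run_within_walk_right a b q d i :
  (forall j, i <= j < i + d -> [/\ a <= j <= b, 1 <= j <= size u &
     delta q (nth x0 u j.-1) = Some (q, Right)]) ->
  run_within a b d (q, i) = Some (q, i + d).
Proof.
elim: d i => [|d IH] i cells; first by rewrite addn0.
have [in_ab in_u dq] := cells i ltac:(lia).
rewrite (run_withinS_delta _ in_ab in_u dq) IH /= ?addSnnS // => j lt_j.
by apply: cells; lia.
Qed.

Lemma run_within_walk_left a b q d i :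
  (forall j, i < j <= i + d -> [/\ a <= j <= b, 1 <= j <= size u &
     delta q (nth x0 u j.-1) = Some (q, Left)]) ->
  run_within a b d (q, i + d) = Some (q, i).
Proof.
elim: d i => [|d IH] i cells; first by rewrite addn0.
have [in_ab in_u dq] := cells (i + d.+1) ltac:(lia).
rewrite (run_withinS_delta _ in_ab in_u dq) /= addnS IH // => j lt_j.
by apply: cells; lia.
Qed.

End Reading.

End WindowedRuns.

Definition wlen (s : nat) : nat := 3 * 2 ^ s.-1 - 1.

Lemma wlen1 : wlen 1 = 2. Proof. by []. Qed.

Lemma wlenS s : 0 < s -> wlen s.+1 = (wlen s).*2.+1.
Proof. by case: s => // s _; rewrite /wlen /= expnS; have := expn_gt0 2 s; lia. Qed.

Lemma wlen_gt0 s : 0 < wlen s.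
Proof. by rewrite /wlen; have := expn_gt0 2 s.-1; lia. Qed.

Lemma leq_wlen : {homo wlen : s t / s <= t}.
Proof.
move=> s t le_st; rewrite /wlen leq_sub2r // leq_mul2l /=.
by rewrite leq_pexp2l //; lia.
Qed.

Section Machine.

Variable N : nat.

Definition state := 'I_N.+1.

Definition letter := (state * {ffun state -> bool})%type.

Definition height (x : letter) : nat := x.1.

Definition peak (h : nat) : letter := (inord h, [ffun => true]).

Definition letter_at (u : seq letter) (j : nat) : letter := nth (peak 0) u j.-1.

Definition decr (q : state) : state := inord q.-1.

Lemma decrE q : decr q = q.-1 :> nat.
Proof. by rewrite inordK // (leq_ltn_trans (leq_pred _) (ltn_ord q)). Qed.

Definition machine : trans state letter := fun q x =>
  if q == 0 :> nat then Some (decr x.1, Right)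
  else if height x == q then Some (decr q, Left)
  else if height x < q then Some (q, if x.2 q then Right else Left)
  else None.

Lemma machine_state0 (q : state) x : q = 0 :> nat -> machine q x = Some (decr x.1, Right).
Proof. by rewrite /machine => ->. Qed.

Lemma machine_peak (q : state) x : 0 < q -> height x = q -> machine q x = Some (decr q, Left).
Proof. by rewrite /machine => q_gt0 ->; rewrite eqxx ifN //; lia. Qed.

Lemma machine_below (q : state) x : 0 < q -> height x < q ->
  machine q x = Some (q, if x.2 q then Right else Left).
Proof.
move=> q_gt0 lt_xq; have q_ne0 : (q == 0 :> nat) = false by lia.
by rewrite /machine q_ne0 ltn_eqF // lt_xq.
Qed.

Lemma machine_above (q : state) x : 0 < q -> q < height x -> machine q x = None.
Proof. by rewrite /machine => q_gt0 lt_qx; rewrite !ifN //; lia. Qed.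

Lemma height_peak_le h : height (peak h) <= h.
Proof. by rewrite /height /= val_insubd; case: ifP. Qed.

Lemma height_peak h : h <= N -> height (peak h) = h.
Proof. by move=> le_hN; rewrite /height /= inordK. Qed.

Definition set_flag (t : nat) (b : bool) (x : letter) : letter :=
  (x.1, [ffun q : state => if q == t :> nat then b else x.2 q]).

Fixpoint witness (s : nat) : seq letter :=
  if s is s'.+1 then
    if s' is 0 then [:: peak 0; peak 1]
    else map (set_flag s true) (witness s') ++ peak s :: map (set_flag s false) (witness s')
  else [::].

Lemma witnessS s : 0 < s -> witness s.+1 =
  map (set_flag s.+1 true) (witness s) ++ peak s.+1 :: map (set_flag s.+1 false) (witness s).
Proof. by case: s. Qed.

Lemma size_witness s : 0 < s -> size (witness s) = wlen s.
Proof.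
elim: s => // s IH _; have [-> // | s_gt0] := posnP s.
by rewrite witnessS // size_cat /= !size_map IH // wlenS //; lia.
Qed.

Lemma height_witness s j : height (nth (peak 0) (witness s) j) <= s.
Proof.
have [lt_j | le_j] := ltnP j (size (witness s)); last first.
  by rewrite nth_default //; apply: leq_trans (height_peak_le 0) _.
move: (mem_nth (peak 0) lt_j); elim: s {j lt_j} (nth _ _ j) => // s IH x.
have [-> | s_gt0] := posnP s.
  rewrite !inE => /orP[] /eqP ->; last exact: height_peak_le.
  exact: leq_trans (height_peak_le 0) _.
rewrite witnessS // mem_cat inE => /or3P[/mapP[y y_in ->] | /eqP -> | /mapP[y y_in ->]].
- exact: leqW (IH _ y_in).
- exact: height_peak_le.
- exact: leqW (IH _ y_in).
Qed.

Lemma nth_witness_left s j : 0 < s -> j < wlen s ->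
  nth (peak 0) (witness s.+1) j = set_flag s.+1 true (nth (peak 0) (witness s) j).
Proof.
move=> s_gt0 lt_j; rewrite witnessS // nth_cat size_map size_witness // lt_j.
by rewrite (nth_map (peak 0)) ?size_witness.
Qed.

Lemma nth_witness_peak s : 0 < s -> nth (peak 0) (witness s.+1) (wlen s) = peak s.+1.
Proof. by move=> s_gt0; rewrite witnessS // nth_cat size_map size_witness // ltnn subnn. Qed.

Lemma nth_witness_right s j : 0 < s -> j < wlen s ->
  nth (peak 0) (witness s.+1) ((wlen s).+1 + j) =
  set_flag s.+1 false (nth (peak 0) (witness s) j).
Proof.
move=> s_gt0 lt_j; rewrite witnessS // nth_cat size_map size_witness // ifN; last by lia.
rewrite (_ : (wlen s).+1 + j - wlen s = j.+1) /=; last by lia.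
by rewrite (nth_map (peak 0)) ?size_witness.
Qed.

(* The halves of the level-(s+1) witness differ from the level-s witness only in
   the flags for state s + 1, which the states 0, ..., s never read. *)
Definition agree_upto (s : nat) (x y : letter) :=
  height x = height y /\ forall q : state, q <= s -> x.2 q = y.2 q.

Lemma agree_set_flag s b x y : agree_upto s.+1 x (set_flag s.+1 b y) ->
  agree_upto s x y /\ forall q : state, q = s.+1 :> nat -> x.2 q = b.
Proof.
case=> eq_h eq_flags; split.
  by split => // q le_qs; rewrite eq_flags ?ffunE ?ifN //; lia.
by move=> q eq_q; rewrite eq_flags ?ffunE ?eq_q ?eqxx //; lia.
Qed.

Section Blocks.

Variable u : seq letter.

Definition window_matches (s a : nat) :=
  forall j, j < wlen s -> agree_upto s (letter_at u (a + j)) (nth (peak 0) (witness s) j).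

Lemma window_matches_left s a : 0 < s -> window_matches s.+1 a -> window_matches s a.
Proof.
move=> s_gt0 wm j lt_j; have := wm j ltac:(rewrite wlenS //; lia).
by rewrite nth_witness_left // => /agree_set_flag[].
Qed.

Lemma window_matches_right s a : 0 < s -> window_matches s.+1 a ->
  window_matches s (a + (wlen s).+1).
Proof.
move=> s_gt0 wm j lt_j; have := wm ((wlen s).+1 + j) ltac:(rewrite wlenS //; lia).
by rewrite nth_witness_right // addnA => /agree_set_flag[].
Qed.

Lemma window_matches_peak s a : 0 < s -> s < N ->
  window_matches s.+1 a -> height (letter_at u (a + wlen s)) = s.+1.
Proof.
move=> s_gt0 lt_sN wm; have [-> _] := wm (wlen s) ltac:(rewrite wlenS //; lia).
by rewrite nth_witness_peak // height_peak.
Qed.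

Lemma machine_flank_left s a (q : state) j : 0 < s -> q = s.+1 :> nat ->
  window_matches s.+1 a -> j < wlen s ->
  machine q (letter_at u (a + j)) = Some (q, Right).
Proof.
move=> s_gt0 eq_q wm lt_j; have := wm j ltac:(rewrite wlenS //; lia).
rewrite nth_witness_left // => /agree_set_flag[[eq_h _] flag_q].
have h_le := height_witness s j.
by rewrite machine_below ?(flag_q q eq_q) // ?eq_h; lia.
Qed.

Lemma machine_flank_right s a (q : state) j : 0 < s -> q = s.+1 :> nat ->
  window_matches s.+1 a -> j < wlen s ->
  machine q (letter_at u (a + (wlen s).+1 + j)) = Some (q, Left).
Proof.
move=> s_gt0 eq_q wm lt_j; have := wm ((wlen s).+1 + j) ltac:(rewrite wlenS //; lia).
rewrite nth_witness_right // -addnA => /agree_set_flag[[eq_h _] flag_q].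
have h_le := height_witness s j.
by rewrite machine_below ?(flag_q q eq_q) // ?eq_h; lia.
Qed.

Lemma decr_ord0 (q : state) : q <= 1 -> decr q = ord0.
Proof. by move=> le_q1; apply: val_inj; rewrite /= decrE; lia. Qed.

Definition block_exits (s : nat) := forall a (q : state) i,
  0 < a -> a + wlen s <= (size u).+1 -> window_matches s a -> q = s :> nat ->
  a <= i < a + wlen s ->
  exists k, run_within machine u a (a + wlen s).-1 k (q, i) = Some (ord0, a + wlen s).

Lemma block_exits1 : block_exits 1.
Proof.
move=> a q i a_gt0; rewrite wlen1 => fits wm eq_q in_i.
have [h0 f0] := wm 0 isT; have [h1 _] := wm 1 isT.
have N_gt0 : 0 < N by have := ltn_ord q; lia.
rewrite addn0 height_peak // in h0 f0.
rewrite addn1 height_peak // in h1.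
have cell j : a <= j <= a.+1 -> a <= j <= (a + 2).-1 /\ 1 <= j <= size u by lia.
have [a_in a_u] := cell a ltac:(lia); have [a1_in a1_u] := cell a.+1 ltac:(lia).
have step_a0 : machine q (letter_at u a) = Some (q, Right).
  by rewrite machine_below ?f0 /= ?ffunE ?h0 ?eq_q.
have step_a1 : machine q (letter_at u a.+1) = Some (decr q, Left).
  by rewrite machine_peak ?h1 ?eq_q.
have step_b0 : machine (decr q) (letter_at u a) = Some (ord0, Right).
  by rewrite machine_state0 ?decrE ?eq_q ?decr_ord0 // -/(height _) h0.
have step_b1 : machine ord0 (letter_at u a.+1) = Some (ord0, Right).
  by rewrite machine_state0 ?decr_ord0 // -/(height _) h1.
have from_a1 : run_within machine u a (a + 2).-1 3 (q, a.+1) = Some (ord0, a + 2).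
  rewrite (run_withinS_delta _ a1_in a1_u step_a1) (run_withinS_delta _ a_in a_u step_b0).
  by rewrite (run_withinS_delta _ a1_in a1_u step_b1) addn2.
have [-> | ne] := eqVneq i a; last by exists 3; rewrite (_ : i = a.+1) //; lia.
by exists 4; rewrite (run_withinS_delta _ a_in a_u step_a0).
Qed.

(* The peak sends state s+1 into the left half as state s, which comes back to
   the peak in state 0 and is sent into the right half as state s again. *)
Lemma block_exitsS s : 0 < s -> block_exits s -> block_exits s.+1.
Proof.
move=> s_gt0 IH a q i a_gt0; rewrite wlenS // => fits wm eq_q in_i.
have m_gt0 := wlen_gt0 s; set m := wlen s in fits in_i m_gt0 *.
set p := a + m; set e := a + m.*2.+1.
have in_win j : a <= j <= e.-1 -> a <= j <= e.-1 /\ 1 <= j <= size u by lia.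
have [p_in p_u] := in_win p ltac:(lia).
have lt_sN : s < N by have := ltn_ord q; lia.
have h_p : height (letter_at u p) = s.+1 := window_matches_peak s_gt0 lt_sN wm.
have from_peak : exists k, run_within machine u a e.-1 k (q, p) = Some (ord0, e).
  have [k1 left] := IH a (decr q) p.-1 a_gt0 ltac:(lia) (window_matches_left s_gt0 wm)
                      ltac:(rewrite decrE; lia) ltac:(lia).
  have wm_r := window_matches_right s_gt0 wm; rewrite addnS -/m -/p in wm_r.
  have [k2 right] := IH p.+1 (decr (letter_at u p).1) p.+1 isT ltac:(lia) wm_r
                       ltac:(by rewrite decrE [nat_of_ord _]h_p) ltac:(lia).
  have down : machine q (letter_at u p) = Some (decr q, Left).
    by rewrite machine_peak ?h_p ?eq_q.
  have up : machine ord0 (letter_at u p) = Some (decr (letter_at u p).1, Right).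
    exact: machine_state0.
  exists (k1.+1 + k2.+1); apply: (run_within_trans (c' := (ord0, p))).
    by rewrite (run_withinS_delta _ p_in p_u down); apply: run_within_widen left; lia.
  rewrite (run_withinS_delta _ p_in p_u up) (_ : e = p.+1 + m); last by lia.
  by apply: run_within_widen right; lia.
have [k from_p] := from_peak.
have [le_ip | lt_pi] := leqP i p.
  exists (p - i + k); apply: run_within_trans from_p.
  rewrite (run_within_walk_right (x0 := peak 0)) ?subnKC // => j in_j.
  have [j_in j_u] := in_win j ltac:(lia); split => //.
  by rewrite (_ : j = a + (j - a)) ?(machine_flank_left s_gt0 eq_q wm) //; lia.
exists (i - p + k); apply: run_within_trans from_p.
rewrite -{2}(subnKC (ltnW lt_pi)) (run_within_walk_left (x0 := peak 0)) // => j in_j.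
have [j_in j_u] := in_win j ltac:(lia); split => //.
by rewrite (_ : j = a + m.+1 + (j - p.+1)) ?(machine_flank_right s_gt0 eq_q wm) //; lia.
Qed.

Lemma block_exits_all s : 0 < s -> block_exits s.
Proof.
elim: s => // s IH _; have [-> | s_gt0] := posnP s; first exact: block_exits1.
exact: block_exitsS s_gt0 (IH s_gt0).
Qed.

End Blocks.

Section LowerBound.

Variable u : seq letter.

Definition exit_bound (k : nat) := forall (s : state) a b i, 0 < s ->
  run_within machine u a b k (s, i) = Some (ord0, b.+1) -> wlen s + a <= b.+1.

Section ExitBoundStep.

Variable k : nat.
Hypothesis IH : forall k', k' < k -> exit_bound k'.
Variables (a b i : nat) (s : state).
Hypothesis s_gt0 : 0 < s.
Hypothesis height_i : height (letter_at u i) = s.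

Lemma exit_bound_reenter (q : state) k' : 0 < q -> k' < k ->
  run_within machine u a b k' (q, i) = Some (ord0, b.+1) -> wlen s + a <= b.+1.
Proof.
move=> q_gt0 lt_k run_q; have [lt_qs | le_sq] := ltnP q s; last first.
  by apply: leq_trans (IH lt_k q_gt0 run_q); rewrite leq_add2r leq_wlen.
case: k' lt_k run_q => [_ [eq_q _] | k' _ run_q]; first by move: q_gt0; rewrite eq_q.
have [_ _ [r [d [step_q _]]]] := run_withinS_inv (peak 0) run_q.
by rewrite machine_above ?height_i in step_q.
Qed.

(* State 0 at the peak is sent right as state s - 1; it either leaves the window
   without coming back, or comes back to the peak. *)
Lemma exit_bound_peak0 k' : 1 < s -> k' < k -> i <= b ->
  run_within machine u a b k' (ord0, i) = Some (ord0, b.+1) ->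
  wlen s.-1 + i <= b \/ wlen s + a <= b.+1.
Proof.
move=> s_gt1; elim/ltn_ind: k' => k' IHk lt_k le_ib run0.
case: k' IHk lt_k run0 => [|k'] IHk lt_k run0; first by case: run0 => eq_i; lia.
have [_ _ [r [d [step0 run_r]]]] := run_withinS_inv (peak 0) run0.
rewrite machine_state0 // in step0; case: step0 => <- <- {r d} in run_r.
change (move Right i) with i.+1 in run_r.
have eq_r : decr (letter_at u i).1 = s.-1 :> nat by rewrite decrE [nat_of_ord _]height_i.
have lt_i : i < (decr (letter_at u i).1, i.+1).2 by [].
case: (run_within_cross_left lt_i run_r) => [inside | [t [q [lt_t back]]]].
  have pos_r : 0 < decr (letter_at u i).1 by rewrite eq_r; lia.
  by left; have := IH (ltnW lt_k) pos_r inside; rewrite eq_r; lia.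
have [q0 | q_gt0] := posnP q; last by right; apply: exit_bound_reenter back; lia.
have eq_q : q = ord0 by apply: val_inj.
by rewrite eq_q in back; apply: IHk back; lia.
Qed.

Lemma exit_bound_left_of_peak k' : k' < k -> 0 < i <= b ->
  run_within machine u a b k' (decr s, i.-1) = Some (ord0, b.+1) -> wlen s + a <= b.+1.
Proof.
move=> lt_k in_i run_l; have [le_s1 | s_gt1] := leqP s 1.
  case: k' lt_k run_l => [|k'] _ run_l; first by case: run_l => _; lia.
  have [in_ab in_u _] := run_withinS_inv (peak 0) run_l.
  by rewrite (_ : nat_of_ord s = 1) ?wlen1; lia.
have lt_i : (decr s, i.-1).2 < i by rewrite /=; lia.
have [t [q [le_t left back]]] := run_within_cross_right lt_i (ltac:(lia) : i <= b.+1) run_l.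
have [q0 | q_gt0] := posnP q; last by apply: exit_bound_reenter back; lia.
have eq_q : q = ord0 by apply: val_inj.
rewrite eq_q -[in Some (_, i)](prednK (proj1 (andP in_i))) in left back.
have := IH (leq_ltn_trans le_t lt_k) (ltac:(rewrite decrE; lia) : 0 < decr s) left.
have := exit_bound_peak0 s_gt1 (ltac:(lia) : k' - t < k) (proj2 (andP in_i)) back.
have wlen_s : wlen s = (wlen s.-1).*2.+1.
  by move: s_gt1; case: (nat_of_ord s) => [|[|m]] // _; rewrite wlenS.
rewrite decrE wlen_s; lia.
Qed.

End ExitBoundStep.

Lemma exit_bound_step k : (forall k', k' < k -> exit_bound k') -> exit_bound k.
Proof.
move=> IH s a b i s_gt0; case: k IH => [|k] IH run_s.
  by case: run_s => eq_s _; move: s_gt0; rewrite eq_s.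
have [in_ab in_u [r [d [step_s run_r]]]] := run_withinS_inv (peak 0) run_s.
case: (ltngtP (height (letter_at u i)) s) => [lt_hs | lt_sh | eq_hs].
- rewrite machine_below // in step_s; case: step_s => <- _ in run_r.
  exact: IH run_r.
- by rewrite machine_above in step_s.
- rewrite machine_peak // in step_s; case: step_s => <- <- in run_r.
  by apply: (exit_bound_left_of_peak IH s_gt0 eq_hs (ltnSn k)) run_r; lia.
Qed.

Lemma exit_bound_all k : exit_bound k.
Proof. by elim/ltn_ind: k => k; apply: exit_bound_step. Qed.

End LowerBound.

End Machine.

Theorem mainTheorem9 (n : nat) (hn : 2 <= n) :
  exists (S : finType) (delta : trans 'I_n S) (w : seq S),
    size w = 3 * 2 ^ (n - 2) - 1 /\
    (forall (q1 qn : 'I_n), nat_of_ord q1 = 0 -> nat_of_ord qn = n.-1 ->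
      (forall i, 1 <= i <= size w -> leaves_right_into delta w i qn q1) /\
      (forall u : seq S, 0 < size u ->
        (exists i, 1 <= i <= size u /\ leaves_right_into delta u i qn q1) ->
        size w <= size u)).
Proof.
case: n hn => [//|N]; rewrite ltnS => N_gt0.
exists (letter N : finType), (@machine N), (witness N N).
have size_w : size (witness N N) = wlen N by rewrite size_witness.
split; first by rewrite size_w /wlen subn2.
move=> q1 qn q1_0 /= qn_N; have -> : q1 = ord0 by apply: val_inj.
split => [i | u _ [i [in_i [k run_k]]]].
  rewrite size_w => in_i.
  have matches : window_matches (witness N N) N 1.
    by move=> j _; rewrite /letter_at add1n.
  have [k run_k] := block_exits_all (u := witness N N) (i := i) N_gt0 (ltn0Sn 0)
                      ltac:(lia) matches qn_N ltac:(lia).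
  by exists k; rewrite -run_within_size size_w -run_k add1n.
rewrite -run_within_size in run_k.
have qn_gt0 : 0 < qn by rewrite qn_N.
by have := exit_bound_all qn_gt0 run_k; rewrite size_w qn_N; lia.
Qed.
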